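(* Consider the system $\dot X=(1-Y)X$, $\dot Y=(X-U)Y$ on $\{X>0,Y>0\}$ with arbitrary input $U$, and let $V(X,Y)=\Psi(1/X)+\Psi(Y/X)$. Then along solutions $\dot V=L(X,Y)+G(X,Y)U$ with $$L(X,Y)=\frac{-(X-1)^2+Y(Y-X)}{X},\qquad G(X,Y)=\frac{X-Y}{X},$$ and for every $(X,Y)$ with $X>0$, $Y>0$, $(X,Y)\neq(1,1)$, there exists $U>0$ such that $L(X,Y)+G(X,Y)U<0$. In particular, whenever $G(X,Y)\ge 0$ and $(X,Y)\ne(1,1)$, one has $L(X,Y)<0$. Thus $V$ is a global control Lyapunov function on $\{X>0,Y>0\}$ with inputs restricted to $U>0$.
   Context: $\Psi(S)=S-1-\ln S$ for $S>0$. *)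

From Stdlib Require Import Reals.
From Coquelicot Require Import Coquelicot.
Open Scope R_scope.

Definition Psi (S : R) : R := S - 1 - ln S.

Definition V (X Y : R) : R := Psi (1 / X) + Psi (Y / X).

Definition Lf (X Y : R) : R := (- (X - 1) ^ 2 + Y * (Y - X)) / X.
Definition Gf (X Y : R) : R := (X - Y) / X.

(* Psi(s) = s - 1 - ln s is nonnegative and vanishes only at s = 1, so V is positive definite
   about (1,1).  Since x * L = -(x-1)^2 + y (y - x) and x * G = x - y, wherever the control
   cannot help (G >= 0, i.e. y <= x) both terms of x * L are nonpositive and not both zero;
   wherever G < 0, a large enough U > 0 makes L + G U negative. *)
From Stdlib Require Import Reals Lra Psatz.
From Coquelicot Require Import Coquelicot.
Open Scope R_scope.

Lemma Psi_1 : Psi 1 = 0.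
Proof. unfold Psi; rewrite ln_1; lra. Qed.

Lemma Psi_gt0 (s : R) : 0 < s -> s <> 1 -> 0 < Psi s.
Proof.
  intros hs hs1; unfold Psi.
  assert (hln : ln s <> 0) by (apply ln_neq_0; lra).
  pose proof (exp_ineq1 _ hln) as hexp; rewrite exp_ln in hexp by lra; lra.
Qed.

Lemma Psi_ge0 (s : R) : 0 < s -> 0 <= Psi s.
Proof.
  intros hs; destruct (Req_dec s 1) as [->|hs1].
  - rewrite Psi_1; lra.
  - now left; apply Psi_gt0.
Qed.

Lemma V_1_1 : V 1 1 = 0.
Proof. unfold V; replace (1 / 1) with 1 by field; rewrite Psi_1; lra. Qed.

Lemma V_gt0 (x y : R) : 0 < x -> 0 < y -> (x, y) <> (1, 1) -> 0 < V x y.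
Proof.
  intros hx hy hne; unfold V.
  assert (h1x : 0 < 1 / x) by (apply Rdiv_lt_0_compat; lra).
  assert (hyx : 0 < y / x) by (apply Rdiv_lt_0_compat; lra).
  destruct (Req_dec x 1) as [->|hx1].
  - assert (hy1 : y <> 1) by (intros ->; now apply hne).
    replace (y / 1) with y by field.
    pose proof (Psi_ge0 _ h1x); pose proof (Psi_gt0 _ hy hy1); lra.
  - assert (h1x1 : 1 / x <> 1).
    { intros e; apply hx1.
      replace x with (1 / (1 / x)) by (field; lra); rewrite e; field. }
    pose proof (Psi_gt0 _ h1x h1x1); pose proof (Psi_ge0 _ hyx); lra.
Qed.

(* The coefficients are the partials of V x y = (1 + y) / x + 2 ln x - ln y - 2. *)
Lemma is_derive_V_comp (X Y : R -> R) (t dX dY : R) :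
  0 < X t -> 0 < Y t -> is_derive X t dX -> is_derive Y t dY ->
  is_derive (fun s => V (X s) (Y s)) t
    ((2 / X t - (1 + Y t) / (X t * X t)) * dX + (1 / X t - 1 / Y t) * dY).
Proof.
  intros hx hy hdX hdY; unfold V, Psi.
  rewrite <- (is_derive_unique _ _ _ hdX), <- (is_derive_unique _ _ _ hdY).
  auto_derive.
  - repeat split; try (eexists; eassumption);
      try (apply Rdiv_lt_0_compat; lra); try lra.
  - change (fun s => X s) with X; change (fun s => Y s) with Y.
    field; lra.
Qed.

Lemma Lf_lt0_of_Gf_ge0 (x y : R) :
  0 < x -> 0 < y -> (x, y) <> (1, 1) -> 0 <= Gf x y -> Lf x y < 0.
Proof.
  intros hx hy hne hG; unfold Gf, Lf in *.
  assert (hyx : y <= x).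
  { apply Rmult_le_compat_r with (r := x) in hG; [|lra].
    replace ((x - y) / x * x) with (x - y) in hG by (field; lra); lra. }
  assert (hnum : - (x - 1) ^ 2 + y * (y - x) < 0).
  { destruct (Req_dec x 1) as [->|hx1].
    - assert (hy1 : y <> 1) by (intros ->; now apply hne).
      nra.
    - assert (0 < (x - 1) * (x - 1)) by (apply Rsqr_pos_lt; lra); nra. }
  now apply Rdiv_neg_pos.
Qed.

Lemma exists_pos_affine_lt0 (a b : R) :
  (0 <= b -> a < 0) -> exists u, 0 < u /\ a + b * u < 0.
Proof.
  intros hab; destruct (Rlt_or_le b 0) as [hb|hb].
  - exists ((Rabs a + 1) / - b); split.
    + apply Rdiv_lt_0_compat; [pose proof (Rabs_pos a)|]; lra.
    + replace (b * ((Rabs a + 1) / - b)) with (- (Rabs a + 1)) by (field; lra).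
      pose proof (Rle_abs a); lra.
  - specialize (hab hb).
    destruct (Req_dec b 0) as [->|hb0].
    + exists 1; lra.
    + exists (- a / (2 * b)); split.
      * apply Rdiv_lt_0_compat; lra.
      * replace (b * (- a / (2 * b))) with (- a / 2) by (field; lra); lra.
Qed.

Theorem mainTheorem6 :
  (* along solutions of X' = (1-Y)X, Y' = (X-U)Y (U an arbitrary input),
     dV/dt = L + G U at every time t where X, Y > 0 *)
  (forall (X Y U : R -> R) (t : R),
      0 < X t -> 0 < Y t ->
      is_derive X t ((1 - Y t) * X t) ->
      is_derive Y t ((X t - U t) * Y t) ->
      is_derive (fun s => V (X s) (Y s)) t (Lf (X t) (Y t) + Gf (X t) (Y t) * U t))
  /\
  (forall x y : R, 0 < x -> 0 < y -> (x, y) <> (1, 1) ->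
      exists u : R, 0 < u /\ Lf x y + Gf x y * u < 0)
  /\
  (forall x y : R, 0 < x -> 0 < y -> (x, y) <> (1, 1) ->
      0 <= Gf x y -> Lf x y < 0)
  /\
  (* V is positive definite on the open quadrant about the equilibrium (1,1) *)
  (V 1 1 = 0 /\
   forall x y : R, 0 < x -> 0 < y -> (x, y) <> (1, 1) -> 0 < V x y).
Proof.
  split; [|split; [|split; [|split]]].
  - intros X Y U t hx hy hdX hdY.
    replace (Lf (X t) (Y t) + Gf (X t) (Y t) * U t)
      with ((2 / X t - (1 + Y t) / (X t * X t)) * ((1 - Y t) * X t)
            + (1 / X t - 1 / Y t) * ((X t - U t) * Y t))
      by (unfold Lf, Gf; field; lra).
    now apply is_derive_V_comp.
  - intros x y hx hy hne.
    apply exists_pos_affine_lt0, Lf_lt0_of_Gf_ge0; assumption.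
  - exact Lf_lt0_of_Gf_ge0.
  - exact V_1_1.
  - exact V_gt0.
Qed.
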